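(* Let $A \in \mathbb{C}^{m\times n}$, $B \in \mathbb{C}^{p\times q}$, $C \in \mathbb{C}^{m\times q}$. Then there always exists $\widehat{X} \in \mathbb{C}^{n\times p}$ such that $A^{*}(C - AXB)(C - AXB)^{*}A \succcurlyeq A^{*}(C - A\widehat{X}B)(C - A\widehat{X}B)^{*}A$ for all $X \in \mathbb{C}^{n\times p}$, and there always exists $\widehat{X} \in \mathbb{C}^{n\times p}$ such that $B(C - AXB)^{*}(C - AXB)B^{*} \succcurlyeq B(C - A\widehat{X}B)^{*}(C - A\widehat{X}B)B^{*}$ for all $X \in \mathbb{C}^{n\times p}$. Moreover, the set of such minimizers $\widehat{X}$ for the first problem, the set of such minimizers for the second problem, and the set of minimizers of $X \mapsto \mathrm{tr}[(C - AXB)(C - AXB)^{*}]$ over $\mathbb{C}^{n\times p}$ all coincide and equal $\{A^{\dagger}CB^{\dagger} + F_AV_1 + V_2E_B : V_1, V_2 \in \mathbb{C}^{n\times p}\}$.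
   Context: $\succcurlyeq$ is the Löwner order ($P \succcurlyeq Q$ iff $P - Q$ is positive semidefinite); $U^{\dagger}$ is the Moore–Penrose inverse; $E_U = I - UU^{\dagger}$, $F_U = I - U^{\dagger}U$; $\mathrm{tr}$ is the trace. *)

(* complex matrices are matrices over R[i] with R : realType
   (R[i] = `complex R` from mathcomp-real-closed, a numClosedFieldType). *)
From mathcomp Require Import all_boot all_algebra spectral.
From mathcomp Require Import reals complex classical_sets.
Set Implicit Arguments.
Unset Strict Implicit.
Unset Printing Implicit Defensive.
Import GRing.Theory Num.Theory.
Local Open Scope ring_scope.
Local Open Scope sesquilinear_scope.

Section Defs.
Variable C : numClosedFieldType.

(* conjugate transpose: M ^t* = (map_mx conjC M)^T  (spectral.v) *)

Definition psdmx n (P : 'M[C]_n) : Prop :=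
  forall x : 'cV[C]_n, 0 <= (x ^t* *m P *m x) 0 0.

Definition loewner_ge n (P Q : 'M[C]_n) : Prop := psdmx (P - Q).

Definition is_mpinv m n (A : 'M[C]_(m, n)) (X : 'M[C]_(n, m)) : Prop :=
  [/\ A *m X *m A = A, X *m A *m X = X,
      (A *m X) ^t* = A *m X & (X *m A) ^t* = X *m A].

Definition mpinv m n (A : 'M[C]_(m, n)) : 'M[C]_(n, m) :=
  xget 0 [set X | is_mpinv A X].

Definition Emx m n (U : 'M[C]_(m, n)) : 'M[C]_m := 1%:M - U *m mpinv U.
Definition Fmx m n (U : 'M[C]_(m, n)) : 'M[C]_n := 1%:M - mpinv U *m U.
End Defs.

From mathcomp Require Import all_boot all_order all_algebra spectral.
From mathcomp Require Import reals complex classical_sets.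
Set Implicit Arguments.
Unset Strict Implicit.
Unset Printing Implicit Defensive.
Import Order.TTheory GRing.Theory Num.Theory.
Local Open Scope ring_scope.
Local Open Scope sesquilinear_scope.

(* With X0 = A^+ C B^+ the residual splits as
   C - A X B = (C - A X0 B) + A (X0 - X) B, and the first summand N satisfies
   the normal equation A^* N B^* = 0.  Hence every cross term vanishes and each
   of the three objectives equals its value at X0 plus a positive semidefinite
   (resp. nonnegative) term that is zero exactly when A (X0 - X) B = 0.  So all
   three minimiser sets are the solution set of A (X0 - X) B = 0, which is
   X0 + F_A V1 + V2 E_B. *)

Section ConjugateTranspose.
Variable K : numClosedFieldType.

Lemma trmxC_mul m n p (A : 'M[K]_(m, n)) (B : 'M[K]_(n, p)) :
  (A *m B)^t* = B^t* *m A^t*.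
Proof. by rewrite trmx_mul map_mxM. Qed.

Lemma trmxCD m n (A B : 'M[K]_(m, n)) : (A + B)^t* = A^t* + B^t*.
Proof. by rewrite linearD /= map_mxD. Qed.

Lemma trmxC0 m n : (0 : 'M[K]_(m, n))^t* = 0.
Proof. by rewrite trmx0 map_mx0. Qed.

Lemma trmxC_inv n (A : 'M[K]_n) : (invmx A)^t* = invmx (A^t*).
Proof. by rewrite trmx_inv map_invmx. Qed.

Lemma mxrank_trmxC m n (A : 'M[K]_(m, n)) : \rank (A^t*) = \rank A.
Proof. by rewrite mxrank_map mxrank_tr. Qed.

Lemma mxtrace_mul_trmxCE m n (M : 'M[K]_(m, n)) :
  \tr (M *m M^t*) = \sum_i \sum_j M i j * (M i j)^*.
Proof.
by apply: eq_bigr => i _; rewrite !mxE; apply: eq_bigr => j _; rewrite !mxE.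
Qed.

Lemma mxtrace_mul_trmxC_ge0 m n (M : 'M[K]_(m, n)) : 0 <= \tr (M *m M^t*).
Proof.
by rewrite mxtrace_mul_trmxCE !sumr_ge0 // => i _; rewrite sumr_ge0 // => j _;
  rewrite mul_conjC_ge0.
Qed.

Lemma mxtrace_mul_trmxC_eq0 m n (M : 'M[K]_(m, n)) :
  \tr (M *m M^t*) = 0 -> M = 0.
Proof.
rewrite mxtrace_mul_trmxCE => /eqP; rewrite psumr_eq0 => [/allP M0|i _]; last first.
  by rewrite sumr_ge0 // => j _; rewrite mul_conjC_ge0.
apply/matrixP => i j; rewrite mxE.
move: (M0 i (mem_index_enum _)) => /implyP/(_ isT).
rewrite psumr_eq0 => [/allP Mi0|k _]; last by rewrite mul_conjC_ge0.
by move: (Mi0 j (mem_index_enum _)) => /implyP/(_ isT); rewrite mul_conjC_eq0 => /eqP.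
Qed.

Lemma row_free_gram_unit r n (G : 'M[K]_(r, n)) :
  row_free G -> G *m G^t* \in unitmx.
Proof.
move=> freeG; rewrite -row_free_unit; apply: inj_row_free => v vGG0.
have : \tr ((v *m G) *m (v *m G)^t*) = 0.
  by rewrite trmxC_mul !mulmxA -(mulmxA v) vGG0 mul0mx mxtrace0.
by move/mxtrace_mul_trmxC_eq0/eqP; rewrite mulmx_free_eq0 // => /eqP.
Qed.

Lemma psdmx_gram k l (Y : 'M[K]_(k, l)) : psdmx (Y^t* *m Y).
Proof.
move=> x; rewrite -trace_mx11.
have -> : x^t* *m (Y^t* *m Y) *m x = (Y *m x)^t* *m (Y *m x)^t*^t*.
  by rewrite trmxCK trmxC_mul !mulmxA.
exact: mxtrace_mul_trmxC_ge0.
Qed.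

Lemma psdmx_opp_gram_eq0 k l (Y : 'M[K]_(k, l)) : psdmx (- (Y^t* *m Y)) -> Y = 0.
Proof.
move=> psdNY; apply/matrixP => i j; rewrite mxE.
pose e : 'cV[K]_l := delta_mx j 0.
have := psdNY e; rewrite -trace_mx11.
have -> : e^t* *m - (Y^t* *m Y) *m e = - ((Y *m e)^t* *m (Y *m e)^t*^t*).
  by rewrite trmxCK trmxC_mul mulmxN mulNmx !mulmxA.
rewrite raddfN oppr_ge0 => le0.
have /mxtrace_mul_trmxC_eq0 : \tr ((Y *m e)^t* *m (Y *m e)^t*^t*) = 0.
  by apply/le_anti; rewrite le0 mxtrace_mul_trmxC_ge0.
move/(congr1 (fun M => M^t*)); rewrite trmxCK trmxC0 /e -colE.
by move/matrixP/(_ i 0); rewrite !mxE.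
Qed.

End ConjugateTranspose.

Section MoorePenrose.
Variable K : numClosedFieldType.

Lemma is_mpinv_full_rank_factor m n r (F : 'M[K]_(m, r)) (G : 'M[K]_(r, n)) :
  row_free (F^t*) -> row_free G ->
  is_mpinv (F *m G) (G^t* *m invmx (G *m G^t*) *m invmx (F^t* *m F) *m F^t*).
Proof.
move=> freeF freeG.
have uG := row_free_gram_unit freeG.
have uF : F^t* *m F \in unitmx by have := row_free_gram_unit freeF; rewrite trmxCK.
have hG : (invmx (G *m G^t*))^t* = invmx (G *m G^t*).
  by rewrite trmxC_inv trmxC_mul trmxCK.
have hF : (invmx (F^t* *m F))^t* = invmx (F^t* *m F).
  by rewrite trmxC_inv trmxC_mul trmxCK.
set KG := invmx (G *m G^t*) in hG *; set KF := invmx (F^t* *m F) in hF *.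
have GKGF : G *m (G^t* *m KG *m KF *m F^t*) = KF *m F^t*.
  by rewrite !mulmxA (mulmxV uG) mul1mx.
have KFFG : KF *m F^t* *m (F *m G) = G.
  by rewrite !mulmxA -(mulmxA KF) (mulVmx uF) mul1mx.
have XFG : G^t* *m KG *m KF *m F^t* *m (F *m G) = G^t* *m KG *m G.
  by rewrite -!mulmxA (mulmxA (F^t*)) (mulmxA KF) (mulVmx uF) mul1mx.
split.
- by rewrite -(mulmxA F) GKGF -mulmxA KFFG.
- by rewrite XFG -!mulmxA (mulmxA G) (mulmxA (G *m G^t*)) (mulmxV uG) mul1mx.
- by rewrite -(mulmxA F) GKGF !trmxC_mul trmxCK hF !mulmxA.
- by rewrite XFG !trmxC_mul trmxCK hG !mulmxA.
Qed.

Lemma mpinvP m n (A : 'M[K]_(m, n)) : is_mpinv A (mpinv A).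
Proof.
suff [X AX] : exists X, is_mpinv A X.
  exact: (@xgetPex _ 0 [set X | is_mpinv A X] (ex_intro _ X AX)).
rewrite -(mulmx_base A); eexists; apply: is_mpinv_full_rank_factor.
  by rewrite /row_free mxrank_trmxC; exact: col_base_full.
exact: row_base_free.
Qed.

Section Penrose.
Variables (m n : nat) (A : 'M[K]_(m, n)).

Lemma mulmx_mpinvK : A *m mpinv A *m A = A.
Proof. by case: (mpinvP A). Qed.

Lemma mpinv_mulmxK : mpinv A *m A *m mpinv A = mpinv A.
Proof. by case: (mpinvP A). Qed.

Lemma trmxC_mulmx_mpinv : (A *m mpinv A)^t* = A *m mpinv A.
Proof. by case: (mpinvP A). Qed.

Lemma trmxC_mpinv_mulmx : (mpinv A *m A)^t* = mpinv A *m A.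
Proof. by case: (mpinvP A). Qed.

Lemma trmxC_mulmx_mpinvK : A^t* *m A *m mpinv A = A^t*.
Proof. by rewrite -mulmxA -trmxC_mulmx_mpinv -trmxC_mul mulmx_mpinvK. Qed.

Lemma mpinv_mulmx_trmxC : mpinv A *m A *m A^t* = A^t*.
Proof. by rewrite -trmxC_mpinv_mulmx -trmxC_mul mulmxA mulmx_mpinvK. Qed.

Lemma mulmx_eq0_trmxCl k (Y : 'M[K]_(n, k)) : (A *m Y)^t* *m A = 0 -> A *m Y = 0.
Proof.
move=> AY0; rewrite -mulmx_mpinvK -mulmxA -trmxC_mulmx_mpinv trmxC_mul -mulmxA.
by rewrite -[A^t* *m _]trmxCK trmxC_mul trmxCK AY0 trmxC0 mulmx0.
Qed.

Lemma mulmx_eq0_trmxCr k (Y : 'M[K]_(k, m)) : Y *m A *m A^t* = 0 -> Y *m A = 0.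
Proof.
move=> YA0; rewrite -mulmx_mpinvK -mulmxA -trmxC_mpinv_mulmx trmxC_mul !mulmxA.
by rewrite YA0 mul0mx.
Qed.

Lemma mulmx_Fmx : A *m Fmx A = 0.
Proof. by rewrite /Fmx mulmxBr mulmx1 mulmxA mulmx_mpinvK subrr. Qed.

Lemma Emx_mulmx : Emx A *m A = 0.
Proof. by rewrite /Emx mulmxBl mul1mx mulmx_mpinvK subrr. Qed.

End Penrose.

Lemma sandwich_eq0P m n p q (A : 'M[K]_(m, n)) (B : 'M[K]_(p, q)) (Y : 'M[K]_(n, p)) :
  A *m Y *m B = 0 <-> exists V1 V2, Y = Fmx A *m V1 + V2 *m Emx B.
Proof.
split=> [AYB0|[V1 [V2 ->]]]; last first.
  by rewrite mulmxDr mulmxDl !mulmxA mulmx_Fmx -!mulmxA Emx_mulmx !mulmx0 mul0mx addr0.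
exists Y, (mpinv A *m A *m Y); rewrite /Fmx /Emx mulmxBl mulmxBr mul1mx mulmx1.
have -> : mpinv A *m A *m Y *m (B *m mpinv B) = mpinv A *m (A *m Y *m B) *m mpinv B.
  by rewrite !mulmxA.
by rewrite AYB0 mulmx0 mul0mx subr0 subrK.
Qed.

End MoorePenrose.

Section OrthogonalSplit.
Variables (K : numClosedFieldType) (k l r s : nat).
Variables (A : 'M[K]_(k, l)) (B : 'M[K]_(r, s)) (N : 'M[K]_(k, s)).
Hypothesis normalN : A^t* *m N *m B^t* = 0.

Lemma gram_residual_splitl (Y : 'M[K]_(l, r)) :
  A^t* *m (N + A *m Y *m B) *m (N + A *m Y *m B)^t* *m A =
  A^t* *m N *m N^t* *m A + ((A *m Y *m B)^t* *m A)^t* *m ((A *m Y *m B)^t* *m A).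
Proof.
have cross : A^t* *m N *m (A *m Y *m B)^t* *m A = 0.
  by rewrite !trmxC_mul !mulmxA normalN !mul0mx.
have cross' : A^t* *m (A *m Y *m B) *m N^t* *m A = 0.
  by move: (congr1 (fun Z => Z^t*) cross); rewrite trmxC0 !trmxC_mul !trmxCK !mulmxA.
rewrite trmxCD mulmxDr !mulmxDl !mulmxDr !mulmxDl cross cross' addr0 add0r.
by rewrite trmxC_mul trmxCK !mulmxA.
Qed.

Lemma mxtrace_residual_split (Y : 'M[K]_(l, r)) :
  \tr ((N + A *m Y *m B) *m (N + A *m Y *m B)^t*) =
  \tr (N *m N^t*) + \tr (A *m Y *m B *m (A *m Y *m B)^t*).
Proof.
have cross : \tr (N *m (A *m Y *m B)^t*) = 0.
  by rewrite !trmxC_mul !mulmxA mxtrace_mulC !mulmxA normalN mul0mx mxtrace0.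
have cross' : \tr (A *m Y *m B *m N^t*) = 0.
  rewrite -!mulmxA mxtrace_mulC -!mulmxA.
  have -> : B *m (N^t* *m A) = (A^t* *m N *m B^t*)^t*.
    by rewrite !trmxC_mul !trmxCK mulmxA.
  by rewrite normalN trmxC0 mulmx0 mxtrace0.
by rewrite trmxCD mulmxDr !mulmxDl !mxtraceD cross cross' addr0 add0r.
Qed.

End OrthogonalSplit.

Lemma gram_residual_splitr (K : numClosedFieldType) k l r s
    (A : 'M[K]_(k, l)) (B : 'M[K]_(r, s)) (N : 'M[K]_(k, s)) (Y : 'M[K]_(l, r)) :
  A^t* *m N *m B^t* = 0 ->
  B *m (N + A *m Y *m B)^t* *m (N + A *m Y *m B) *m B^t* =
  B *m N^t* *m N *m B^t* + (A *m Y *m B *m B^t*)^t* *m (A *m Y *m B *m B^t*).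
Proof.
move=> normalN; have normalNt : B^t*^t* *m N^t* *m A^t*^t* = 0.
  rewrite !trmxCK; move: (congr1 (fun Z => Z^t*) normalN).
  by rewrite !trmxC_mul !trmxCK trmxC0 !mulmxA.
have sumE : N^t* + B^t* *m Y^t* *m A^t* = (N + A *m Y *m B)^t*.
  by rewrite trmxCD !trmxC_mul mulmxA.
move: (gram_residual_splitl normalNt (Y^t*)); rewrite !trmxCK sumE trmxCK => ->.
by rewrite !trmxC_mul !trmxCK !mulmxA.
Qed.

Section Minimisation.
Variables (K : numClosedFieldType) (T : Type) (x0 xh : T).

Lemma loewner_minP k l (f : T -> 'M[K]_k) (c : 'M[K]_k) (g : T -> 'M[K]_(l, k)) :
  (forall x, f x = c + (g x)^t* *m g x) -> g x0 = 0 ->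
  (forall x, loewner_ge (f x) (f xh)) <-> g xh = 0.
Proof.
rewrite /loewner_ge => fE gx0; split=> [/(_ x0)|gxh x]; rewrite !fE.
  rewrite gx0 trmxC0 mul0mx addr0 opprD addrA subrr add0r.
  exact: psdmx_opp_gram_eq0.
by rewrite gxh trmxC0 mul0mx addr0 addrAC subrr add0r; exact: psdmx_gram.
Qed.

Lemma mxtrace_minP k l (f : T -> K) (c : K) (g : T -> 'M[K]_(k, l)) :
  (forall x, f x = c + \tr (g x *m (g x)^t*)) -> g x0 = 0 ->
  (forall x, f xh <= f x) <-> g xh = 0.
Proof.
move=> fE gx0; split=> [/(_ x0)|gxh x]; rewrite !fE.
  rewrite gx0 trmxC0 mulmx0 mxtrace0 addr0 gerDl => le0.
  by apply/mxtrace_mul_trmxC_eq0/le_anti; rewrite le0 mxtrace_mul_trmxC_ge0.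
by rewrite gxh trmxC0 mulmx0 mxtrace0 addr0 lerDl mxtrace_mul_trmxC_ge0.
Qed.

End Minimisation.

Arguments loewner_minP {K T} x0 xh {k l f c} g.
Arguments mxtrace_minP {K T} x0 xh {k l f c} g.

Section LeastSquares.
Variables (K : numClosedFieldType) (m n p q : nat).
Variables (A : 'M[K]_(m, n)) (B : 'M[K]_(p, q)) (C : 'M[K]_(m, q)).

Let X0 := mpinv A *m C *m mpinv B.
Let N := C - A *m X0 *m B.

Lemma normal_equation_mpinv : A^t* *m N *m B^t* = 0.
Proof.
rewrite /N /X0 mulmxBr mulmxBl !mulmxA trmxC_mulmx_mpinvK.
by rewrite -!mulmxA [mpinv B *m _]mulmxA mpinv_mulmx_trmxC subrr.
Qed.

Lemma residual_mpinv_split X : C - A *m X *m B = N + A *m (X0 - X) *m B.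
Proof. by rewrite /N mulmxBr mulmxBl addrA subrK. Qed.

Lemma minimiser_setP Xh : A *m (X0 - Xh) *m B = 0 <->
  exists V1 V2, Xh = mpinv A *m C *m mpinv B + Fmx A *m V1 + V2 *m Emx B.
Proof.
rewrite -/X0; apply: iff_trans (sandwich_eq0P _ _ _) _.
split=> [[V1 [V2 XE]]|[V1 [V2 ->]]]; exists (- V1), (- V2).
  by rewrite mulmxN mulNmx -addrA -opprD -XE opprB addrC subrK.
by rewrite -addrA opprD addrA subrr add0r mulmxN mulNmx opprD.
Qed.

Lemma left_gram_minP Xh :
  (forall X, loewner_ge
     (A^t* *m (C - A *m X *m B) *m (C - A *m X *m B)^t* *m A)
     (A^t* *m (C - A *m Xh *m B) *m (C - A *m Xh *m B)^t* *m A))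
  <-> A *m (X0 - Xh) *m B = 0.
Proof.
apply: iff_trans
  (loewner_minP X0 Xh (fun X => (A *m (X0 - X) *m B)^t* *m A) _ _) _.
- by move=> X; rewrite residual_mpinv_split gram_residual_splitl ?normal_equation_mpinv.
- by rewrite subrr mulmx0 mul0mx trmxC0 mul0mx.
split=> [|->]; last by rewrite trmxC0 mul0mx.
by rewrite -mulmxA => /mulmx_eq0_trmxCl; rewrite mulmxA.
Qed.

Lemma right_gram_minP Xh :
  (forall X, loewner_ge
     (B *m (C - A *m X *m B)^t* *m (C - A *m X *m B) *m B^t*)
     (B *m (C - A *m Xh *m B)^t* *m (C - A *m Xh *m B) *m B^t*))
  <-> A *m (X0 - Xh) *m B = 0.
Proof.
apply: iff_trans
  (loewner_minP X0 Xh (fun X => A *m (X0 - X) *m B *m B^t*) _ _) _.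
- by move=> X; rewrite residual_mpinv_split gram_residual_splitr ?normal_equation_mpinv.
- by rewrite subrr mulmx0 !mul0mx.
by split=> [/mulmx_eq0_trmxCr|->]; rewrite ?mul0mx.
Qed.

Lemma mxtrace_residual_minP Xh :
  (forall X, \tr ((C - A *m Xh *m B) *m (C - A *m Xh *m B)^t*)
             <= \tr ((C - A *m X *m B) *m (C - A *m X *m B)^t*))
  <-> A *m (X0 - Xh) *m B = 0.
Proof.
apply: (mxtrace_minP X0 Xh (fun X => A *m (X0 - X) *m B)).
- by move=> X; rewrite residual_mpinv_split mxtrace_residual_split ?normal_equation_mpinv.
- by rewrite subrr mulmx0 mul0mx.
Qed.

End LeastSquares.

Local Open Scope complex_scope.

Theorem theorem7p4 (R : realType) (m n p q : nat)
  (A : 'M[R[i]]_(m, n)) (B : 'M[R[i]]_(p, q)) (C : 'M[R[i]]_(m, q)) :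
  (exists Xh : 'M[R[i]]_(n, p), forall X : 'M[R[i]]_(n, p),
     loewner_ge
       (A ^t* *m (C - A *m X *m B) *m (C - A *m X *m B) ^t* *m A)
       (A ^t* *m (C - A *m Xh *m B) *m (C - A *m Xh *m B) ^t* *m A)) /\
  (exists Xh : 'M[R[i]]_(n, p), forall X : 'M[R[i]]_(n, p),
     loewner_ge
       (B *m (C - A *m X *m B) ^t* *m (C - A *m X *m B) *m B ^t*)
       (B *m (C - A *m Xh *m B) ^t* *m (C - A *m Xh *m B) *m B ^t*)) /\
  (forall Xh : 'M[R[i]]_(n, p),
     ((forall X : 'M[R[i]]_(n, p),
        loewner_ge
          (A ^t* *m (C - A *m X *m B) *m (C - A *m X *m B) ^t* *m A)
          (A ^t* *m (C - A *m Xh *m B) *m (C - A *m Xh *m B) ^t* *m A))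
      <-> (exists V1 V2 : 'M[R[i]]_(n, p),
             Xh = mpinv A *m C *m mpinv B + Fmx A *m V1 + V2 *m Emx B)) /\
     ((forall X : 'M[R[i]]_(n, p),
        loewner_ge
          (B *m (C - A *m X *m B) ^t* *m (C - A *m X *m B) *m B ^t*)
          (B *m (C - A *m Xh *m B) ^t* *m (C - A *m Xh *m B) *m B ^t*))
      <-> (exists V1 V2 : 'M[R[i]]_(n, p),
             Xh = mpinv A *m C *m mpinv B + Fmx A *m V1 + V2 *m Emx B)) /\
     ((forall X : 'M[R[i]]_(n, p),
        \tr ((C - A *m Xh *m B) *m (C - A *m Xh *m B) ^t*)
        <= \tr ((C - A *m X *m B) *m (C - A *m X *m B) ^t*))
      <-> (exists V1 V2 : 'M[R[i]]_(n, p),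
             Xh = mpinv A *m C *m mpinv B + Fmx A *m V1 + V2 *m Emx B))).
Proof.
have X0min : A *m (mpinv A *m C *m mpinv B - mpinv A *m C *m mpinv B) *m B = 0.
  by rewrite subrr mulmx0 mul0mx.
split; [|split].
- by exists (mpinv A *m C *m mpinv B); apply/left_gram_minP.
- by exists (mpinv A *m C *m mpinv B); apply/right_gram_minP.
move=> Xh; split; [|split]; apply: iff_trans (minimiser_setP A B C Xh).
- exact: left_gram_minP.
- exact: right_gram_minP.
- exact: mxtrace_residual_minP.
Qed.
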